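(* The monoid $\operatorname{NDPF}^{(1)}_N$ is generated by the functions $f_0,\dots,f_{N-1}$, and these satisfy the relations $f_i^2=f_i$; $f_if_j=f_jf_i$ whenever $i,j$ are not adjacent modulo $N$; and $f_if_{i+1}f_i=f_{i+1}f_if_{i+1}=f_{i+1}f_i$, with indices taken modulo $N$.
   Context: $\operatorname{NDPF}^{(1)}_N$ is the set of functions $f:\mathbb{Z}\to\mathbb{Z}$ that are regressive ($f(i)\le i$), order preserving ($i\le j\Rightarrow f(i)\le f(j)$) and skew periodic ($f(i+N)=f(i)+N$), excluding the shift functions $i\mapsto i-t$ with $t\neq0$; it is a monoid under composition, with functions acting on the right: $fg$ means apply $f$ first, then $g$. For $i\in\{0,\dots,N-1\}$, $f_i(j)=j-1$ if $j\equiv i+1 \pmod N$ and $f_i(j)=j$ otherwise. *)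

From Stdlib Require Import ZArith List.
Open Scope Z_scope.

(* Functions Z -> Z; composition acts on the right: (rcomp f g) = "fg" = apply f first, then g. *)
Definition rcomp (f g : Z -> Z) : Z -> Z := fun x => g (f x).

Definition regressive (f : Z -> Z) : Prop := forall i, f i <= i.
Definition order_preserving (f : Z -> Z) : Prop := forall i j, i <= j -> f i <= f j.
Definition skew_periodic (N : Z) (f : Z -> Z) : Prop := forall i, f (i + N) = f i + N.
Definition is_nonzero_shift (f : Z -> Z) : Prop :=
  exists t, t <> 0 /\ forall i, f i = i - t.

Definition NDPF1 (N : Z) (f : Z -> Z) : Prop :=
  regressive f /\ order_preserving f /\ skew_periodic N f /\ ~ is_nonzero_shift f.

Definition fgen (N i : Z) : Z -> Z :=
  fun j => if (j - (i + 1)) mod N =? 0 then j - 1 else j.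

Fixpoint word (N : Z) (l : list Z) : Z -> Z :=
  match l with
  | nil => fun x => x
  | i :: l' => rcomp (fgen N i) (word N l')
  end.

Definition adjacent (N i j : Z) : Prop := j = (i + 1) mod N \/ i = (j + 1) mod N.

From Stdlib Require Import ZArith List Lia Classical Wf_nat.
Open Scope Z_scope.

(* That the generators lie in NDPF^(1)_N and satisfy the relations is a finite
   check on residues modulo N.  Generation is proved by induction on the defect
   sum_{0 <= x < N} (x - g x).  If g has no jump, i.e. g (x + 1) <= g x + 1
   everywhere, then skew periodicity forces g to be a shift, hence the identity.
   Otherwise, at a jump x the value v := g x satisfies v < x and v + 1 is not
   attained.  Raising g by one at every point y with g y congruent to v mod N
   and g y < y gives an element h of NDPF^(1)_N of smaller defect with
   g = h f_{v mod N}: f_{v mod N} lowers exactly the values congruent to v + 1,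
   and by skew periodicity no value of g is. *)

Lemma fgen_residue N i y :
  fgen N i y = if y mod N =? (i + 1) mod N then y - 1 else y.
Proof.
  unfold fgen. destruct (Z.eqb_spec (y mod N) ((i + 1) mod N)) as [E | E].
  - now apply Z.cong_iff_0 in E as ->.
  - now rewrite Z.cong_iff_0, <- Z.eqb_neq in E; rewrite E.
Qed.

Lemma Zmod_pred N y : 0 < N ->
  (y - 1) mod N = if y mod N =? 0 then N - 1 else y mod N - 1.
Proof.
  intros HN. pose proof (Z.div_mod y N ltac:(lia)). pose proof (Z.mod_pos_bound y N HN).
  symmetry. destruct (Z.eqb_spec (y mod N) 0).
  - apply (Z.mod_unique _ _ (y / N - 1)); lia.
  - apply (Z.mod_unique _ _ (y / N)); lia.
Qed.

Lemma Zmod_succ_small N a : 0 <= a < N ->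
  (a + 1) mod N = if a =? N - 1 then 0 else a + 1.
Proof.
  intros Ha. destruct (Z.eqb_spec a (N - 1)).
  - replace (a + 1) with N by lia. apply Z.mod_same; lia.
  - apply Z.mod_small; lia.
Qed.

Ltac residue_cases N HN :=
  repeat match goal with
  | H : context [(?y - 1) mod N] |- _ => rewrite (Zmod_pred N y HN) in H
  | |- context [(?y - 1) mod N] => rewrite (Zmod_pred N y HN)
  | H : context [(?a + 1) mod N] |- _ => rewrite (Zmod_succ_small N a) in H by lia
  | |- context [(?a + 1) mod N] => rewrite (Zmod_succ_small N a) by lia
  | H : (_ =? _) = true |- _ => apply Z.eqb_eq in H
  | H : (_ =? _) = false |- _ => apply Z.eqb_neq in H
  | |- context [if ?b then _ else _] => destruct b eqn:?
  | H : context [if ?b then _ else _] |- _ => destruct b eqn:?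
  end.

Lemma Zmod_add_modulus N y : N <> 0 -> (y + N) mod N = y mod N.
Proof. intros HN. rewrite <- (Z.mod_add y 1 N HN). f_equal. ring. Qed.

Lemma Zmod_neg1_neq0 N : 2 <= N -> (-1) mod N <> 0.
Proof.
  intros HN. rewrite (Z.mod_divide (-1) N ltac:(lia)). intros [m Hm].
  destruct (Z.le_gt_cases m (-1)); nia.
Qed.

Lemma fixpoint_not_nonzero_shift f y : f y = y -> ~ is_nonzero_shift f.
Proof. intros Hy [t [Ht Hf]]. rewrite Hf in Hy. lia. Qed.

Lemma skew_periodic_mul N g : skew_periodic N g ->
  forall m x, g (x + m * N) = g x + m * N.
Proof.
  intros Hg m. induction m as [| m IH | m IH] using Z.peano_ind; intros x.
  - now rewrite Z.mul_0_l, !Z.add_0_r.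
  - replace (x + Z.succ m * N) with (x + m * N + N) by (unfold Z.succ; ring). rewrite Hg, IH. ring.
  - pose proof (Hg (x + Z.pred m * N)) as Hstep.
    replace (x + Z.pred m * N + N) with (x + m * N) in Hstep by (unfold Z.pred; ring).
    rewrite IH in Hstep. lia.
Qed.

Section Generators.
Variable N : Z.
Hypothesis HN : 2 <= N.

Lemma fgen_NDPF1 i : 0 <= i < N -> NDPF1 N (fgen N i).
Proof.
  intros Hi. assert (HN0 : 0 < N) by lia.
  repeat split.
  - intros j. rewrite fgen_residue. destruct (_ =? _); lia.
  - intros a b Hab. rewrite !fgen_residue.
    destruct (Z.eq_dec a b) as [-> | Hne]; [lia |].
    destruct (_ =? _), (_ =? _); lia.
  - intros j. rewrite !fgen_residue, Zmod_add_modulus by lia.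
    destruct (_ =? _); lia.
  - apply (fixpoint_not_nonzero_shift _ i). rewrite fgen_residue, (Z.mod_small i) by lia.
    residue_cases N HN0; lia.
Qed.

Lemma fgen_idem i : 0 <= i < N ->
  forall x, rcomp (fgen N i) (fgen N i) x = fgen N i x.
Proof.
  intros Hi x. assert (HN0 : 0 < N) by lia. unfold rcomp. rewrite !fgen_residue.
  pose proof (Z.mod_pos_bound x N HN0). residue_cases N HN0; lia.
Qed.

Lemma fgen_comm i j : 0 <= i < N -> 0 <= j < N -> ~ adjacent N i j ->
  forall x, rcomp (fgen N i) (fgen N j) x = rcomp (fgen N j) (fgen N i) x.
Proof.
  intros Hi Hj Hadj x. assert (HN0 : 0 < N) by lia. unfold adjacent, rcomp in *.
  rewrite !fgen_residue. pose proof (Z.mod_pos_bound x N HN0). residue_cases N HN0; lia.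
Qed.

End Generators.

Lemma fgen_braid N i : 3 <= N -> 0 <= i < N ->
  let k := (i + 1) mod N in
  (forall x, rcomp (rcomp (fgen N i) (fgen N k)) (fgen N i) x
             = rcomp (rcomp (fgen N k) (fgen N i)) (fgen N k) x) /\
  (forall x, rcomp (rcomp (fgen N k) (fgen N i)) (fgen N k) x
             = rcomp (fgen N k) (fgen N i) x).
Proof.
  intros HN Hi k. assert (HN0 : 0 < N) by lia. subst k.
  split; intros x; unfold rcomp; rewrite !fgen_residue;
    pose proof (Z.mod_pos_bound x N HN0); residue_cases N HN0; lia.
Qed.

Section Jumps.
Variables (N : Z) (g : Z -> Z).
Hypotheses (HN : 0 < N) (Hreg : regressive g) (Hmono : order_preserving g)
  (Hskew : skew_periodic N g).

Lemma no_jump_shift : (forall x, g (x + 1) <= g x + 1) -> forall x, g x = g 0 + x.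
Proof.
  intros Hstep.
  assert (Hsteps : forall n, 0 <= n -> forall x, g (x + n) <= g x + n).
  { apply (natlike_ind (fun n => forall x, g (x + n) <= g x + n)).
    - intros x. rewrite Z.add_0_r. lia.
    - intros n _ IH x. specialize (IH x). specialize (Hstep (x + n)).
      replace (x + Z.succ n) with (x + n + 1) by lia. lia. }
  assert (Hunit : forall x, g (x + 1) = g x + 1).
  { intros x. pose proof (Hmono x (x + 1) ltac:(lia)).
    pose proof (Hstep x). pose proof (Hsteps (N - 1) ltac:(lia) (x + 1)) as Hperiod.
    replace (x + 1 + (N - 1)) with (x + N) in Hperiod by ring.
    rewrite Hskew in Hperiod. lia. }
  intros x. induction x as [| x IH | x IH] using Z.peano_ind.
  - ring.
  - rewrite <- Z.add_1_r, Hunit. lia.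
  - pose proof (Hunit (Z.pred x)) as Hx. replace (Z.pred x + 1) with x in Hx by lia. lia.
Qed.

Lemma jump_missing_value x : g x + 1 < g (x + 1) ->
  g x < x /\ forall z, g z <> g x + 1.
Proof.
  intros Hjump. split.
  - pose proof (Hreg (x + 1)). lia.
  - intros z Hz. destruct (Z.le_gt_cases z x) as [Hzx | Hzx].
    + pose proof (Hmono z x Hzx). lia.
    + pose proof (Hmono (x + 1) z ltac:(lia)). lia.
Qed.

End Jumps.

Lemma NDPF1_id_or_jump N g : 0 < N -> NDPF1 N g ->
  (forall x, g x = x) \/ exists x, g x + 1 < g (x + 1).
Proof.
  intros HN [Hreg [Hmono [Hskew Hnshift]]].
  destruct (classic (exists x, g x + 1 < g (x + 1))) as [Hjump | Hnojump]; [now right |].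
  left. assert (Hshift : forall x, g x = g 0 + x).
  { apply (no_jump_shift N); auto. intros x. apply Z.nlt_ge. intros Hx. eauto. }
  destruct (Z.eq_dec (g 0) 0) as [H0 | H0].
  - intros x. rewrite Hshift. lia.
  - exfalso. apply Hnshift. exists (- g 0). split; [lia |]. intros x. rewrite Hshift. lia.
Qed.

Section Bump.
Variables (N v : Z) (g : Z -> Z).
Hypotheses (HN : 2 <= N) (Hreg : regressive g) (Hmono : order_preserving g)
  (Hskew : skew_periodic N g).

Definition bump_at x : bool := ((g x - v) mod N =? 0) && (g x <? x).

Definition bump x : Z := if bump_at x then g x + 1 else g x.

Lemma bump_cases x :
  (bump x = g x + 1 /\ (g x - v) mod N = 0 /\ g x < x) \/
  (bump x = g x /\ ~ ((g x - v) mod N = 0 /\ g x < x)).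
Proof.
  unfold bump, bump_at.
  destruct (Z.eqb_spec ((g x - v) mod N) 0), (Z.ltb_spec (g x) x); simpl; [left | right..];
    repeat split; auto; lia.
Qed.

Lemma bump_regressive : regressive bump.
Proof. intros x. pose proof (Hreg x). destruct (bump_cases x); lia. Qed.

Lemma bump_order_preserving : order_preserving bump.
Proof.
  intros x y Hxy. pose proof (Hmono x y Hxy).
  destruct (Z.eq_dec (g x) (g y)) as [E | E].
  - destruct (bump_cases x), (bump_cases y); rewrite <- ?E in *; lia.
  - destruct (bump_cases x), (bump_cases y); lia.
Qed.

Lemma bump_skew_periodic : skew_periodic N bump.
Proof.
  intros x. unfold bump.
  replace (bump_at (x + N)) with (bump_at x).
  - rewrite !Hskew. destruct (bump_at x); ring.
  - unfold bump_at. rewrite Hskew.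
    replace (g x + N - v) with (g x - v + N) by ring. rewrite Zmod_add_modulus by lia.
    f_equal. destruct (Z.ltb_spec (g x) x), (Z.ltb_spec (g x + N) (x + N)); lia.
Qed.

Lemma bump_not_nonzero_shift : ~ is_nonzero_shift bump.
Proof.
  intros [t [Ht Hshift]].
  assert (Ht_pos : 0 < t) by (pose proof (bump_regressive 0); rewrite Hshift in *; lia).
  pose proof (Hshift (v + t)) as Hv.
  pose proof (Hreg (v + t)).
  destruct (bump_cases (v + t)) as [[Hb [Hcls _]] | [Hb Hnot]].
  - replace (g (v + t) - v) with (-1) in Hcls by lia. now apply (Zmod_neg1_neq0 N).
  - apply Hnot. replace (g (v + t) - v) with 0 by lia. split; [apply Z.mod_0_l |]; lia.
Qed.

Lemma bump_NDPF1 : NDPF1 N bump.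
Proof.
  split; [| split; [| split]].
  - exact bump_regressive.
  - exact bump_order_preserving.
  - exact bump_skew_periodic.
  - exact bump_not_nonzero_shift.
Qed.

Hypothesis Hmiss : forall z, g z <> v + 1.

Lemma missing_class x : (g x - 1 - v) mod N <> 0.
Proof.
  rewrite (Z.mod_divide _ N ltac:(lia)). intros [m Hm].
  apply (Hmiss (x + (- m) * N)). rewrite skew_periodic_mul by auto. lia.
Qed.

Lemma fgen_bump x : fgen N (v mod N) (bump x) = g x.
Proof.
  unfold fgen.
  replace (bump x - (v mod N + 1)) with (bump x - 1 - v mod N) by ring.
  rewrite Zminus_mod_idemp_r.
  destruct (bump_cases x) as [[-> [Hcls _]] | [-> _]].
  - replace (g x + 1 - 1 - v) with (g x - v) by ring. rewrite Hcls. simpl. ring.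
  - destruct (Z.eqb_spec ((g x - 1 - v) mod N) 0) as [E | _]; [| reflexivity].
    exfalso. now apply (missing_class x).
Qed.

End Bump.

Fixpoint sumZ (f : Z -> Z) (n : nat) : Z :=
  match n with O => 0 | S n' => sumZ f n' + f (Z.of_nat n') end.

Lemma sumZ_nonneg f n : (forall x, 0 <= f x) -> 0 <= sumZ f n.
Proof. intros Hf. induction n; simpl; [lia |]. pose proof (Hf (Z.of_nat n)). lia. Qed.

Lemma sumZ_le f f' n : (forall x, f' x <= f x) -> sumZ f' n <= sumZ f n.
Proof. intros Hf. induction n; simpl; [lia |]. pose proof (Hf (Z.of_nat n)). lia. Qed.

Lemma sumZ_lt f f' n k : (forall x, f' x <= f x) -> (k < n)%nat ->
  f' (Z.of_nat k) < f (Z.of_nat k) -> sumZ f' n < sumZ f n.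
Proof.
  intros Hf Hk Hlt. induction n as [| n IH]; simpl; [lia |].
  pose proof (Hf (Z.of_nat n)).
  destruct (Nat.eq_dec k n) as [-> | Hne].
  - pose proof (sumZ_le f f' n Hf). lia.
  - pose proof (IH ltac:(lia)). lia.
Qed.

Definition defect N (g : Z -> Z) : Z := sumZ (fun x => x - g x) (Z.to_nat N).

Lemma defect_nonneg N g : regressive g -> 0 <= defect N g.
Proof. intros Hreg. apply sumZ_nonneg. intros x. pose proof (Hreg x). lia. Qed.

Lemma defect_bump_lt N v g x0 : 2 <= N -> skew_periodic N g ->
  g x0 = v -> v < x0 -> defect N (bump N v g) < defect N g.
Proof.
  intros HN Hskew Hx0 Hvx0. unfold defect.
  set (q := x0 / N). set (x1 := x0 mod N).
  pose proof (Z.div_mod x0 N ltac:(lia)). pose proof (Z.mod_pos_bound x0 N ltac:(lia)).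
  assert (Hgx1 : g x1 = v - q * N).
  { pose proof (skew_periodic_mul N g Hskew q x1) as Hq.
    replace (x1 + q * N) with x0 in Hq by (subst x1 q; lia). lia. }
  apply (sumZ_lt _ _ _ (Z.to_nat x1)).
  - intros x. destruct (bump_cases N v g x); lia.
  - lia.
  - rewrite Z2Nat.id by lia.
    destruct (bump_cases N v g x1) as [[-> _] | [_ Hnot]]; [lia |].
    exfalso. apply Hnot. split.
    + replace (g x1 - v) with ((- q) * N) by lia. apply Z.mod_mul. lia.
    + lia.
Qed.

Lemma word_snoc N l i x : word N (l ++ i :: nil) x = fgen N i (word N l x).
Proof. revert x. induction l as [| j l IH]; intros x; simpl; unfold rcomp; auto. Qed.

Lemma NDPF1_word N g : 2 <= N -> NDPF1 N g ->
  exists l, Forall (fun i => 0 <= i < N) l /\ forall x, g x = word N l x.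
Proof.
  intros HN. induction g as [g IH]
    using (well_founded_induction (well_founded_ltof _ (fun g => Z.to_nat (defect N g)))).
  intros Hg. pose proof Hg as [Hreg [Hmono [Hskew _]]].
  destruct (NDPF1_id_or_jump N g ltac:(lia) Hg) as [Hid | [x Hjump]].
  { exists nil. split; [constructor | exact Hid]. }
  destruct (jump_missing_value g Hreg Hmono x Hjump) as [Hvx Hmiss].
  set (v := g x) in *.
  pose proof (defect_bump_lt N v g x HN Hskew eq_refl Hvx) as Hdec.
  pose proof (defect_nonneg N _ (bump_regressive N v g Hreg)).
  destruct (IH (bump N v g)) as [l [Hl Hw]].
  - unfold ltof. lia.
  - now apply bump_NDPF1.
  - exists (l ++ v mod N :: nil). split.
    + apply Forall_app. split; [exact Hl |]. constructor; [apply Z.mod_pos_bound; lia | constructor].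
    + intros y. rewrite word_snoc, <- Hw. symmetry. now apply fgen_bump.
Qed.

Theorem mainTheorem6 (N : Z) (HN : 3 <= N) :
  (forall i, 0 <= i < N -> NDPF1 N (fgen N i)) /\
  (forall g, NDPF1 N g ->
     exists l : list Z, Forall (fun i => 0 <= i < N) l /\ forall x, g x = word N l x) /\
  (forall i, 0 <= i < N -> forall x, rcomp (fgen N i) (fgen N i) x = fgen N i x) /\
  (forall i j, 0 <= i < N -> 0 <= j < N -> ~ adjacent N i j ->
     forall x, rcomp (fgen N i) (fgen N j) x = rcomp (fgen N j) (fgen N i) x) /\
  (forall i, 0 <= i < N ->
     let k := (i + 1) mod N in
     (forall x, rcomp (rcomp (fgen N i) (fgen N k)) (fgen N i) x
                = rcomp (rcomp (fgen N k) (fgen N i)) (fgen N k) x) /\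
     (forall x, rcomp (rcomp (fgen N k) (fgen N i)) (fgen N k) x
                = rcomp (fgen N k) (fgen N i) x)).
Proof.
  assert (HN2 : 2 <= N) by lia.
  split; [| split; [| split; [| split]]].
  - intros i. exact (fgen_NDPF1 N HN2 i).
  - intros g. exact (NDPF1_word N g HN2).
  - intros i. exact (fgen_idem N HN2 i).
  - intros i j. exact (fgen_comm N HN2 i j).
  - intros i. exact (fgen_braid N i HN).
Qed.
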